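(* Let $\mathcal{H}$ and $\mathcal{K}$ be finite-dimensional complex Hilbert spaces and let $\mathcal{E}$ be a quantum channel (completely positive trace-preserving linear map) from operators on $\mathcal{H}$ to operators on $\mathcal{K}$, with adjoint $\mathcal{E}^\dagger$. Let $A(0)=\sum_i a_i(0)\,\Pi_i(0)$ be a Hermitian operator on $\mathcal{H}$ and $B(t)=\sum_f b_f(t)\,\Xi_f(t)$ a Hermitian operator on $\mathcal{K}$, written in their spectral decompositions (so $\{\Pi_i(0)\}_i$ and $\{\Xi_f(t)\}_f$ are families of mutually orthogonal projectors summing to the identity). Suppose that $[\Pi_i(0),\mathcal{E}^\dagger(\Xi_f(t))]\neq 0$ for some pair $(i,f)$. Then there exists no family of functions $\rho\mapsto p_{if}(\rho)$, defined on all density operators $\rho$ on $\mathcal{H}$ and taking values in $[0,\infty)$ (i.e. each $(p_{if}(\rho))_{i,f}$ is a probability distribution), satisfying both: (a) correct marginals: for all $\rho$, $\sum_f p_{if}(\rho)=\mathrm{Tr}(\Pi_i(0)\rho)$ for every $i$ and $\sum_i p_{if}(\rho)=\mathrm{Tr}(\Xi_f(t)\mathcal{E}(\rho))$ for every $f$; (b) convex-linearity: whenever $\rho=\sum_k p_k\rho_k$ is a convex combination of density operators, $p_{if}(\rho)=\sum_k p_k\, p_{if}(\rho_k)$ for all $i,f$.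
   Context: The adjoint $\mathcal{E}^\dagger$ of a channel $\mathcal{E}$ is the linear map defined by $\mathrm{Tr}(X\,\mathcal{E}(Y))=\mathrm{Tr}(\mathcal{E}^\dagger(X)\,Y)$ for all operators $X$ on $\mathcal{K}$ and $Y$ on $\mathcal{H}$; if $\mathcal{E}(\rho)=\sum_k K_k\rho K_k^\dagger$ then $\mathcal{E}^\dagger(X)=\sum_k K_k^\dagger X K_k$. *)

From HB Require Import structures.
From mathcomp Require Import all_boot all_order all_algebra.
From mathcomp Require Import complex mxtens.
From mathcomp Require Import reals.
Set Implicit Arguments. Unset Strict Implicit. Unset Printing Implicit Defensive.
Import Order.TTheory GRing.Theory Num.Theory.
Local Open Scope ring_scope.

Section QDefs.
Variable C : numClosedFieldType.

Definition mxH (p q : nat) (M : 'M[C]_(p, q)) : 'M[C]_(q, p) := (map_mx Num.conj M)^T.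

Definition hermitian (n : nat) (M : 'M[C]_n) : Prop := mxH M = M.

Definition psd (n : nat) (M : 'M[C]_n) : Prop :=
  hermitian M /\ forall v : 'cV[C]_n, 0 <= (mxH v *m M *m v) 0 0.

Definition density (n : nat) (rho : 'M[C]_n) : Prop := psd rho /\ \tr rho = 1.

Definition projector (n : nat) (P : 'M[C]_n) : Prop := hermitian P /\ P *m P = P.

Definition pvm (n : nat) (I : finType) (P : I -> 'M[C]_n) : Prop :=
  [/\ forall i, projector (P i),
      forall i j, i != j -> P i *m P j = 0
    & \sum_i P i = 1%:M].

Definition spectral_decomp (n : nat) (I : finType) (A : 'M[C]_n)
    (a : I -> C) (P : I -> 'M[C]_n) : Prop :=
  [/\ hermitian A, pvm P, forall i, P i != 0,
      (injective a /\ forall i, a i \is Num.real) & A = \sum_i a i *: P i].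

Definition mxblk (k n : nat) (X : 'M[C]_(k * n)) (a b : 'I_k) : 'M[C]_n :=
  \matrix_(i, j) X (mxtens_index (a, i)) (mxtens_index (b, j)).

(* ampliation id_k (x) E acting on M_k (x) M_n = M_(k*n) *)
Definition ampl (n m k : nat) (E : 'M[C]_n -> 'M[C]_m) (X : 'M[C]_(k * n))
  : 'M[C]_(k * m) :=
  \matrix_(r, c) E (mxblk X (mxtens_unindex r).1 (mxtens_unindex c).1)
                   (mxtens_unindex r).2 (mxtens_unindex c).2.

Definition completely_positive (n m : nat) (E : 'M[C]_n -> 'M[C]_m) : Prop :=
  forall (k : nat) (X : 'M[C]_(k * n)), psd X -> psd (@ampl n m k E X).

Definition trace_preserving (n m : nat) (E : 'M[C]_n -> 'M[C]_m) : Prop :=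
  forall X, \tr (E X) = \tr X.

(* quantum channel: CPTP linear map (linearity is carried by the {linear} type) *)
Definition channel (n m : nat) (E : {linear 'M[C]_n -> 'M[C]_m}) : Prop :=
  completely_positive E /\ trace_preserving E.

Definition is_adjoint (n m : nat) (E : 'M[C]_n -> 'M[C]_m) (Ed : 'M[C]_m -> 'M[C]_n)
  : Prop := forall (X : 'M[C]_m) (Y : 'M[C]_n), \tr (X *m E Y) = \tr (Ed X *m Y).

End QDefs.

From Pilot Require Import Defs.
From HB Require Import structures.
From mathcomp Require Import all_boot all_order all_algebra.
From mathcomp Require Import complex mxtens.
From mathcomp Require Import reals.
From mathcomp Require Import ring lra.
Set Implicit Arguments. Unset Strict Implicit. Unset Printing Implicit Defensive.
Import Order.TTheory GRing.Theory Num.Theory.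
Local Open Scope ring_scope.

(* Convex-linearity lets each p_if be extended positively homogeneously to
   unnormalised states; on rank-one operators |v><v| it becomes a nonnegative
   "mass" that is additive over equal nonnegative combinations.  The
   Pi-marginal makes the (i, f)-mass of v vanish when Pi_i v = 0, and a
   limiting argument then shows that the mass takes the same value at x + y
   and x - y.  Summing over i, the quadratic form <v, E^dag(Xi_f) v> given by
   the Xi-marginal has no cross term between vectors lying in disjoint sets of
   eigenspaces of A, so E^dag(Xi_f) is block diagonal for the Pi_i and
   commutes with them. *)

Section ConjugateTranspose.
Variable C : numClosedFieldType.

Lemma mxH_mul p q r (A : 'M[C]_(p, q)) (B : 'M[C]_(q, r)) :
  mxH (A *m B) = mxH B *m mxH A.
Proof. by rewrite /mxH map_mxM trmx_mul. Qed.

Lemma mxHK p q (A : 'M[C]_(p, q)) : mxH (mxH A) = A.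
Proof. by apply/matrixP=> i j; rewrite !mxE conjCK. Qed.

Lemma mxHD p q (A B : 'M[C]_(p, q)) : mxH (A + B) = mxH A + mxH B.
Proof. by apply/matrixP=> i j; rewrite !mxE rmorphD. Qed.

Lemma mxHN p q (A : 'M[C]_(p, q)) : mxH (- A) = - mxH A.
Proof. by apply/matrixP=> i j; rewrite !mxE rmorphN. Qed.

Lemma mxHZ p q c (A : 'M[C]_(p, q)) : mxH (c *: A) = c^* *: mxH A.
Proof. by apply/matrixP=> i j; rewrite !mxE rmorphM. Qed.

Lemma mxH_delta p (r : 'I_p) :
  mxH (delta_mx r 0) = delta_mx 0 r :> 'M[C]_(1, p).
Proof. by apply/matrixP=> i j; rewrite !mxE conjC_nat andbC. Qed.

End ConjugateTranspose.

Section PureStates.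
Variables (C : numClosedFieldType) (n : nat).
Implicit Types (u v w x y : 'cV[C]_n) (X : 'M[C]_n).

Definition sesq X u w : C := (mxH u *m X *m w) 0 0.

Definition outer v : 'M[C]_n := v *m mxH v.

Lemma tr_mul_outer X v : \tr (X *m outer v) = sesq X v v.
Proof. by rewrite /outer mulmxA mxtrace_mulC /mxtrace big_ord1 mulmxA. Qed.

Lemma tr_outerE v : \tr (outer v) = \sum_j v j 0 * (v j 0)^*.
Proof.
rewrite -[outer v]mul1mx tr_mul_outer /sesq mulmx1 mxE.
by apply: eq_bigr => j _; rewrite !mxE mulrC.
Qed.

Lemma tr_outer_ge0 v : 0 <= \tr (outer v).
Proof. by rewrite tr_outerE; apply: sumr_ge0 => j _; apply: mul_conjC_ge0. Qed.

Lemma tr_outer_eq0 v : (\tr (outer v) == 0) = (v == 0).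
Proof.
apply/eqP/eqP => [|->]; last by rewrite /outer mul0mx mxtrace0.
rewrite tr_outerE => /psumr_eq0P v0; apply/matrixP => j k; rewrite ord1 mxE.
by apply/eqP; rewrite -mul_conjC_eq0 v0 // => i _; apply: mul_conjC_ge0.
Qed.

Lemma outerN v : outer (- v) = outer v.
Proof. by rewrite /outer mxHN mulNmx mulmxN opprK. Qed.

Lemma outer0 : outer 0 = 0.
Proof. by rewrite /outer mul0mx. Qed.

Lemma outer_density v :
  v != 0 -> density ((\tr (outer v))^-1 *: outer v).
Proof.
rewrite -tr_outer_eq0 => trv0.
have trV_real : ((\tr (outer v))^-1)^* = (\tr (outer v))^-1.
  by rewrite geC0_conj // invr_ge0 tr_outer_ge0.
split; [split|]; last by rewrite mxtraceZ mulVf.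
  by rewrite /Defs.hermitian mxHZ trV_real /outer mxH_mul mxHK.
move=> x; rewrite -scalemxAr -scalemxAl mxE /outer !mulmxA -(mulmxA _ (mxH v)).
have -> : mxH v *m x = mxH (mxH x *m v) by rewrite mxH_mul mxHK.
set z := mxH x *m v; rewrite mxE big_ord1 !mxE.
by rewrite mulr_ge0 ?mul_conjC_ge0 ?invr_ge0 ?tr_outer_ge0.
Qed.

Lemma outerDZ x y (c : C) : c^* = c ->
  outer (x + c *: y) + c *: outer (x - y)
  = (1 + c) *: outer x + (c * (1 + c)) *: outer y.
Proof.
move=> cc; rewrite /outer !mxHD mxHZ mxHN cc.
rewrite !mulmxDl !mulmxDr -!scalemxAl -!scalemxAr !mulNmx !mulmxN.
move: (x *m mxH x) (x *m mxH y) (y *m mxH x) (y *m mxH y) => A B B' D.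
by apply/matrixP => r s; rewrite !mxE; ring.
Qed.

Lemma outer_parallelogram x y :
  outer (x + y) + outer (x - y) = 2 *: outer x + 2 *: outer y.
Proof.
rewrite /outer !mxHD mxHN !mulmxDl !mulmxDr !mulNmx !mulmxN.
move: (x *m mxH x) (x *m mxH y) (y *m mxH x) (y *m mxH y) => A B B' D.
by apply/matrixP => r s; rewrite !mxE; ring.
Qed.

Lemma sesq_polarization X u w :
  sesq X (u + w) (u + w) - sesq X (u - w) (u - w)
  = 2 * (sesq X u w + sesq X w u).
Proof.
rewrite /sesq !mxHD mxHN !mulmxDl !mulmxDr !mulNmx !mulmxN.
move: (mxH u *m X *m u) (mxH u *m X *m w) (mxH w *m X *m u) (mxH w *m X *m w).
by move=> A B B' D; rewrite !mxE; ring.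
Qed.

Lemma sesqZr X u w c : sesq X u (c *: w) = c * sesq X u w.
Proof. by rewrite /sesq -scalemxAr mxE. Qed.

Lemma sesqZl X u w c : sesq X (c *: u) w = c^* * sesq X u w.
Proof. by rewrite /sesq mxHZ -!scalemxAl mxE. Qed.

Lemma sesq_eq0 X u w :
  sesq X u w + sesq X w u = 0 -> sesq X u ('i *: w) + sesq X ('i *: w) u = 0 ->
  sesq X u w = 0.
Proof.
rewrite sesqZr sesqZl conjCi; move: (sesq X u w) (sesq X w u) => a b sym0.
rewrite mulNr -mulrBr => /eqP; rewrite mulf_eq0 (negbTE (neq0Ci _)) /=.
rewrite subr_eq0 => /eqP ab; move: sym0; rewrite -ab => /eqP.
by rewrite -mulr2n mulrn_eq0 /= => /eqP.
Qed.

End PureStates.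

Section ProjectionValuedMeasures.
Variables (C : numClosedFieldType) (n : nat) (I : finType) (Pi : I -> 'M[C]_n).
Hypothesis pvmPi : pvm Pi.

Lemma pvm_comm_of_offdiag_eq0 X :
  (forall a b, a != b -> Pi a *m X *m Pi b = 0) ->
  forall i, Pi i *m X = X *m Pi i.
Proof.
case: pvmPi => _ _ sumPi offdiag0 i.
transitivity (Pi i *m X *m Pi i).
  rewrite -{1}[Pi i *m X]mulmx1 -sumPi mulmx_sumr (bigD1 i) //= big1 ?addr0 //.
  by move=> k ki; apply: offdiag0; rewrite eq_sym.
rewrite -[X in RHS]mul1mx -sumPi !mulmx_suml (bigD1 i) //= big1 ?addr0 //.
by move=> k ki; apply: offdiag0.
Qed.

(* Polarizing at u := Pi_a e_r and w := Pi_b e_s, then at u and i w, isolates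
   the (r, s) entry of Pi_a X Pi_b. *)
Lemma pvm_offdiag_eq0 X :
  (forall u w, (forall k, Pi k *m u = 0 \/ Pi k *m w = 0) ->
     sesq X u w + sesq X w u = 0) ->
  forall a b, a != b -> Pi a *m X *m Pi b = 0.
Proof.
case: pvmPi => projPi orthPi _ cross0 a b ab; apply/matrixP => r s.
pose u := Pi a *m delta_mx r (0 : 'I_1); pose w := Pi b *m delta_mx s (0 : 'I_1).
have apart k : Pi k *m u = 0 \/ Pi k *m w = 0.
  have [->|ka] := eqVneq k a; [right|left].
    by rewrite /w mulmxA orthPi // mul0mx.
  by rewrite /u mulmxA orthPi // mul0mx.
have uXw : sesq X u w = (Pi a *m X *m Pi b) r s.
  rewrite /sesq; have -> : mxH u *m X *m w
                           = delta_mx 0 r *m (Pi a *m X *m Pi b) *m delta_mx s 0.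
    by rewrite /u /w mxH_mul mxH_delta (projPi a).1 !mulmxA.
  by rewrite -rowE -colE !mxE.
rewrite -uXw mxE; apply: sesq_eq0; apply: cross0 => // k.
by case: (apart k) => [|Pw]; [left|right; rewrite -scalemxAr Pw scaler0].
Qed.

End ProjectionValuedMeasures.

Lemma le_of_le_mul1D (R : realFieldType) (a b : R) :
  0 <= b -> (forall t, 0 < t -> a <= (1 + t) * b) -> a <= b.
Proof.
move=> b_ge0 le_ab; apply/ler_addgt0Pr => e e_gt0.
have b1_gt0 : 0 < b + 1 by lra.
apply: le_trans (le_ab (e / (b + 1)) _) _; first by rewrite divr_gt0.
rewrite mulrDl mul1r lerD2l mulrAC ler_pdivrMr // ler_pM2l //; lra.
Qed.

Section HomogeneousExtension.
Variables (R : rcfType) (n : nat).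
Local Notation C := R[i].
Local Notation rc := (real_complex R).
Local Notation trR M := (complex.Re (\tr M)).
Implicit Types (q : 'M[C]_n -> R) (M rho : 'M[C]_n) (v x y : 'cV[C]_n).

Definition convex_on_states q := forall t rho1 rho2, 0 <= t <= 1 ->
  density rho1 -> density rho2 ->
  q (rc t *: rho1 + rc (1 - t) *: rho2) = t * q rho1 + (1 - t) * q rho2.

(* [hext q (rc t *: rho) = t * q rho] for a density [rho] and [t >= 0]; the
   junk value [0^-1 = 0] makes [hext q] vanish on traceless operators. *)
Definition hext q M : R := trR M * q (rc (trR M)^-1 *: M).

Lemma Re_real_complexM (t : R) (z : C) : complex.Re (rc t * z) = t * complex.Re z.
Proof. by case: z => a b /=; rewrite mul0r subr0. Qed.

Lemma hext0 q : hext q 0 = 0.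
Proof. by rewrite /hext mxtrace0 mul0r. Qed.

Lemma hextZ q t M : hext q (rc t *: M) = t * hext q M.
Proof.
rewrite /hext mxtraceZ Re_real_complexM scalerA -rmorphM.
have [->|t0] := eqVneq t 0; first by rewrite !mul0r.
have -> : (t * trR M)^-1 * t = (trR M)^-1 by rewrite invfM mulrAC mulVf ?mul1r.
by rewrite mulrA.
Qed.

Lemma hext_density q rho : density rho -> hext q rho = q rho.
Proof. by case=> _ tr1; rewrite /hext tr1 /= invr1 rmorph1 scale1r mul1r. Qed.

Lemma hext_sum (J : finType) (qs : J -> 'M[C]_n -> R) M :
  hext (fun rho => \sum_j qs j rho) M = \sum_j hext (qs j) M.
Proof. by rewrite /hext mulr_sumr. Qed.

Lemma trR_outer_ge0 v : 0 <= trR (outer v).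
Proof. by rewrite -ler0c RRe_real ?tr_outer_ge0 // ger0_real ?tr_outer_ge0. Qed.

Lemma outer_scaled_density v :
  v != 0 -> exists2 rho, density rho & outer v = rc (trR (outer v)) *: rho.
Proof.
move=> v0; exists ((\tr (outer v))^-1 *: outer v); first exact: outer_density.
rewrite RRe_real ?ger0_real ?tr_outer_ge0 // scalerA.
by rewrite mulfV ?scale1r ?tr_outer_eq0.
Qed.

Lemma hext_outer_trace q X v :
  (forall rho, density rho -> rc (q rho) = \tr (X *m rho)) ->
  rc (hext q (outer v)) = \tr (X *m outer v).
Proof.
move=> qX; have [->|v0] := eqVneq v 0.
  by rewrite outer0 hext0 mulmx0 mxtrace0 rmorph0.
have [rho rho_dens ->] := outer_scaled_density v0.
by rewrite hextZ hext_density // rmorphM /= qX // -scalemxAr mxtraceZ.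
Qed.

Section ConvexFunctional.
Variable q : 'M[C]_n -> R.
Hypothesis q_ge0 : forall rho, density rho -> 0 <= q rho.
Hypothesis q_convex : convex_on_states q.

Lemma hext_mix s1 s2 rho1 rho2 : 0 <= s1 -> 0 <= s2 ->
  density rho1 -> density rho2 ->
  hext q (rc s1 *: rho1 + rc s2 *: rho2) = s1 * q rho1 + s2 * q rho2.
Proof.
move=> s1_ge0 s2_ge0 dens1 dens2.
have trS : trR (rc s1 *: rho1 + rc s2 *: rho2) = s1 + s2.
  by rewrite mxtraceD !mxtraceZ dens1.2 dens2.2 !mulr1 -rmorphD.
rewrite /hext trS; have [S0|S0] := eqVneq (s1 + s2) 0.
  have [-> ->] : s1 = 0 /\ s2 = 0 by split; lra.
  by rewrite !(addr0, mul0r).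
have S_gt0 : 0 < s1 + s2 by rewrite lt_def S0 addr_ge0.
rewrite scalerDr !scalerA -!rmorphM.
have -> : (s1 + s2)^-1 * s2 = 1 - (s1 + s2)^-1 * s1 by field.
rewrite q_convex //; first by field.
apply/andP; split; first by rewrite mulr_ge0 // invr_ge0 ltW.
by rewrite mulrC ler_pdivrMr // mul1r lerDl.
Qed.

Lemma hext_outer_ge0 v : 0 <= hext q (outer v).
Proof.
have [->|v0] := eqVneq v 0; first by rewrite outer0 hext0.
have [rho rho_dens ->] := outer_scaled_density v0.
by rewrite hextZ hext_density // mulr_ge0 ?q_ge0 ?trR_outer_ge0.
Qed.

Lemma hext_outer_mix a1 a2 v1 v2 : 0 <= a1 -> 0 <= a2 ->
  hext q (rc a1 *: outer v1 + rc a2 *: outer v2)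
  = a1 * hext q (outer v1) + a2 * hext q (outer v2).
Proof.
move=> a1_ge0 a2_ge0.
have [->|v1_0] := eqVneq v1 0.
  by rewrite outer0 hext0 scaler0 add0r hextZ mulr0 add0r.
have [->|v2_0] := eqVneq v2 0.
  by rewrite outer0 hext0 scaler0 addr0 hextZ mulr0 addr0.
have [rho1 dens1 ->] := outer_scaled_density v1_0.
have [rho2 dens2 ->] := outer_scaled_density v2_0.
rewrite !scalerA -!rmorphM hext_mix ?mulr_ge0 ?trR_outer_ge0 //.
by rewrite !hextZ !hext_density // !mulrA.
Qed.

Lemma hext_outer_mix_eq a1 a2 b1 b2 v1 v2 w1 w2 :
  0 <= a1 -> 0 <= a2 -> 0 <= b1 -> 0 <= b2 ->
  rc a1 *: outer v1 + rc a2 *: outer v2 = rc b1 *: outer w1 + rc b2 *: outer w2 ->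
  a1 * hext q (outer v1) + a2 * hext q (outer v2)
  = b1 * hext q (outer w1) + b2 * hext q (outer w2).
Proof.
move=> a1_ge0 a2_ge0 b1_ge0 b2_ge0 mix.
exact: etrans (esym (hext_outer_mix v1 v2 a1_ge0 a2_ge0))
              (etrans (congr1 (hext q) mix) (hext_outer_mix w1 w2 b1_ge0 b2_ge0)).
Qed.

(* Let [t] tend to [0] in
   [outer (x + t y) + t outer (x - y) = (1 + t) outer x + t (1 + t) outer y]. *)
Lemma hext_outer_subr_le x y :
  hext q (outer x) = 0 -> hext q (outer (x - y)) <= hext q (outer y).
Proof.
move=> qx0; apply: le_of_le_mul1D (hext_outer_ge0 y) _ => t t_gt0.
have t_ge0 := ltW t_gt0.
have mix : rc 1 *: outer (x + rc t *: y) + rc t *: outer (x - y)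
           = rc (1 + t) *: outer x + rc (t * (1 + t)) *: outer y.
  rewrite rmorph1 scale1r !(rmorphM, rmorphD, rmorph1).
  by apply: outerDZ; rewrite geC0_conj ?ler0c.
have t1_ge0 : 0 <= 1 + t by rewrite addr_ge0.
have := hext_outer_mix_eq ler01 t_ge0 t1_ge0 (mulr_ge0 t_ge0 t1_ge0) mix.
move: (hext_outer_ge0 (x + rc t *: y)); rewrite qx0.
move: (hext q _) (hext q (outer (x - y))) (hext q (outer y)) => A B D A_ge0.
rewrite mul1r mulr0 add0r => eqAB.
have : t * B <= t * ((1 + t) * D) by rewrite mulrA -eqAB lerDr.
by rewrite ler_pM2l.
Qed.

Lemma hext_outer_addr x y :
  hext q (outer x) = 0 -> hext q (outer (x + y)) = hext q (outer (x - y)).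
Proof.
move=> qx0; have le_sub := hext_outer_subr_le y qx0.
have le_add := hext_outer_subr_le (- y) qx0; rewrite opprK outerN in le_add.
have mix : rc 1 *: outer (x + y) + rc 1 *: outer (x - y)
           = rc 2 *: outer x + rc 2 *: outer y.
  by rewrite rmorph1 !scale1r rmorph_nat outer_parallelogram.
have := hext_outer_mix_eq ler01 ler01 (ler0n _ 2) (ler0n _ 2) mix.
move: le_sub le_add; rewrite qx0.
move: (hext q (outer (x + y))) (hext q (outer (x - y))) (hext q (outer y)).
move=> A B D; lra.
Qed.

End ConvexFunctional.
End HomogeneousExtension.

Lemma convex_on_states_of_mixtures (R : rcfType) n (q : 'M[R[i]]_n -> R) :
  (forall (N : nat) (w : 'I_N -> R) (rhos : 'I_N -> 'M[R[i]]_n),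
     (forall k, 0 <= w k) -> \sum_k w k = 1 -> (forall k, density (rhos k)) ->
     q (\sum_k real_complex R (w k) *: rhos k) = \sum_k w k * q (rhos k)) ->
  convex_on_states q.
Proof.
move=> q_mix t rho1 rho2 /andP[t_ge0 t_le1] dens1 dens2.
have := q_mix 2 (fun k => if val k == 0%N then t else 1 - t)
                (fun k => if val k == 0%N then rho1 else rho2).
rewrite !big_ord_recl !big_ord0 /= !addr0; apply.
- by move=> k; case: ifP => _; lra.
- by rewrite addrC subrK.
- by move=> k; case: ifP.
Qed.

Section JointDistribution.
Variables (R : rcfType) (n m : nat).
Variables (E : 'M[R[i]]_n -> 'M[R[i]]_m) (Ed : 'M[R[i]]_m -> 'M[R[i]]_n).
Variables (I F : finType) (Pi : I -> 'M[R[i]]_n) (Xi : F -> 'M[R[i]]_m).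
Variable p : 'M[R[i]]_n -> I -> F -> R.
Hypothesis adjE : is_adjoint E Ed.
Hypothesis p_ge0 : forall rho, density rho -> forall i f, 0 <= p rho i f.
Hypothesis p_marginals : forall rho, density rho ->
  (forall i, real_complex R (\sum_f p rho i f) = \tr (Pi i *m rho)) /\
  (forall f, real_complex R (\sum_i p rho i f) = \tr (Xi f *m E rho)).
Hypothesis p_convex : forall i f, convex_on_states (fun rho => p rho i f).

(* the weight p_if would give to the unnormalised pure state |v><v| *)
Local Notation mass i f v := (hext (fun rho => p rho i f) (outer v)).

Lemma mass_eq0 i f v : Pi i *m v = 0 -> mass i f v = 0.
Proof.
move=> Piv0; have : real_complex R (\sum_f' mass i f' v) = \tr (Pi i *m outer v).
  rewrite -hext_sum; apply: hext_outer_trace => rho rho_dens.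
  exact: (p_marginals rho_dens).1.
rewrite /outer mulmxA Piv0 mul0mx mxtrace0 -(rmorph0 (real_complex R)).
move=> /complexI /psumr_eq0P -> //= f' _.
by apply: hext_outer_ge0 => rho rho_dens; apply: p_ge0.
Qed.

Lemma sum_mass f v : real_complex R (\sum_i mass i f v) = sesq (Ed (Xi f)) v v.
Proof.
rewrite -hext_sum -tr_mul_outer; apply: hext_outer_trace => rho rho_dens.
by rewrite (p_marginals rho_dens).2 adjE.
Qed.

Lemma adjoint_cross_eq0 f u w :
  (forall i, Pi i *m u = 0 \/ Pi i *m w = 0) ->
  sesq (Ed (Xi f)) u w + sesq (Ed (Xi f)) w u = 0.
Proof.
move=> apart.
have mass_sym i : mass i f (u + w) = mass i f (u - w).
  have q_ge0 rho : density rho -> 0 <= p rho i f by move=> /p_ge0; apply.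
  case: (apart i) => [Piu0|Piw0].
    exact: (hext_outer_addr q_ge0 (p_convex i f) w (mass_eq0 f Piu0)).
  rewrite addrC -opprB outerN.
  exact: (hext_outer_addr q_ge0 (p_convex i f) u (mass_eq0 f Piw0)).
have diag_eq :
    sesq (Ed (Xi f)) (u + w) (u + w) = sesq (Ed (Xi f)) (u - w) (u - w).
  rewrite -(sum_mass f (u + w)) -(sum_mass f (u - w)).
  by apply: congr1; apply: eq_bigr => i _; apply: mass_sym.
have := sesq_polarization (Ed (Xi f)) u w; rewrite diag_eq subrr => /esym/eqP.
by rewrite mulf_eq0 pnatr_eq0 /= => /eqP.
Qed.

End JointDistribution.

Theorem theorem1 (R : realType) (n m : nat)
    (E : {linear 'M[R[i]]_n -> 'M[R[i]]_m}) (Ed : 'M[R[i]]_m -> 'M[R[i]]_n)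
    (I F : finType)
    (A : 'M[R[i]]_n) (a : I -> R[i]) (Pi : I -> 'M[R[i]]_n)
    (B : 'M[R[i]]_m) (b : F -> R[i]) (Xi : F -> 'M[R[i]]_m) :
  channel E ->
  is_adjoint E Ed ->
  spectral_decomp A a Pi ->
  spectral_decomp B b Xi ->
  (exists i f, Pi i *m Ed (Xi f) != Ed (Xi f) *m Pi i) ->
  ~ exists p : 'M[R[i]]_n -> I -> F -> R,
      [/\ (forall rho, density rho -> forall i f, 0 <= p rho i f),
          (forall rho, density rho ->
             (forall i, real_complex R (\sum_f p rho i f) = \tr (Pi i *m rho)) /\
             (forall f, real_complex R (\sum_i p rho i f) = \tr (Xi f *m E rho)))
        & (forall (N : nat) (w : 'I_N -> R) (rhos : 'I_N -> 'M[R[i]]_n),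
             (forall k, 0 <= w k) -> \sum_k w k = 1 ->
             (forall k, density (rhos k)) ->
             forall i f,
               p (\sum_k real_complex R (w k) *: rhos k) i f
               = \sum_k w k * p (rhos k) i f)].
Proof.
move=> _ adjE [_ pvmPi _ _ _] _ [i [f /eqP noncomm]] [p [p_ge0 p_marg p_mix]].
have p_convex i' f' : convex_on_states (fun rho => p rho i' f').
  by apply: convex_on_states_of_mixtures => N w rhos w_ge0 w1 dens; apply: p_mix.
apply/noncomm/(pvm_comm_of_offdiag_eq0 pvmPi)/(pvm_offdiag_eq0 pvmPi) => u w.
exact: adjoint_cross_eq0 adjE p_ge0 p_marg p_convex f u w.
Qed.
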